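(* Let $a,b,c,d,e,f\in[0,1]$ and set $Q_3=2abef+2acdf+2bcde+2abd+2ace+2bcf+2def+a^2+b^2+c^2+d^2+e^2+f^2-a^2f^2-b^2e^2-c^2d^2-1$, $A_i=d^2+e^2+f^2+2def-1$, $A_j=b^2+c^2+f^2+2bcf-1$, $A_k=a^2+c^2+e^2+2ace-1$, $A_h=a^2+b^2+d^2+2abd-1$. If $A_\nu\ge 0$ for at least one $\nu\in\{i,j,k,h\}$, then $Q_3\ge0$. In particular, if $A_\nu>0$ for some $\nu$, then $Q_3>0$.
   Context: In the paper $a,\dots,f$ are the cosines $\cos\Phi_{ij},\cos\Phi_{ik},\cos\Phi_{ih},\cos\Phi_{jk},\cos\Phi_{jh},\cos\Phi_{kh}$ of edge weights $\Phi\in[0,\frac{\pi}{2}]$ on a truncated tetrahedron $\{ijkh\}$. *)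

From Stdlib Require Import Reals.
Open Scope R_scope.

Definition Q3 (a b c d e f : R) : R :=
  2*a*b*e*f + 2*a*c*d*f + 2*b*c*d*e + 2*a*b*d + 2*a*c*e + 2*b*c*f + 2*d*e*f
  + a^2 + b^2 + c^2 + d^2 + e^2 + f^2 - a^2*f^2 - b^2*e^2 - c^2*d^2 - 1.

Definition A_i (a b c d e f : R) : R := d^2 + e^2 + f^2 + 2*d*e*f - 1.
Definition A_j (a b c d e f : R) : R := b^2 + c^2 + f^2 + 2*b*c*f - 1.
Definition A_k (a b c d e f : R) : R := a^2 + c^2 + e^2 + 2*a*c*e - 1.
Definition A_h (a b c d e f : R) : R := a^2 + b^2 + d^2 + 2*a*b*d - 1.

From Stdlib Require Import Reals Lra.
Open Scope R_scope.

(* Q3 exceeds A_i by a sum of manifestly nonnegative terms when all cosines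
   lie in [0, 1].  Relabeling the vertices of the tetrahedron leaves Q3
   invariant and permutes A_i, A_j, A_k, A_h, so Q3 dominates every A_nu. *)

Lemma Q3_sub_A_i (a b c d e f : R) :
  Q3 a b c d e f - A_i a b c d e f =
  a^2 * (1 - f^2) + b^2 * (1 - e^2) + c^2 * (1 - d^2)
  + 2 * (a*b*e*f + a*c*d*f + b*c*d*e + a*b*d + a*c*e + b*c*f).
Proof. unfold Q3, A_i; ring. Qed.

Lemma sqr_mul_one_sub_sqr_ge0 (x y : R) : 0 <= y <= 1 -> 0 <= x^2 * (1 - y^2).
Proof. intros; apply Rmult_le_pos; nra. Qed.

Lemma A_i_le_Q3 (a b c d e f : R)
  (ha : 0 <= a <= 1) (hb : 0 <= b <= 1) (hc : 0 <= c <= 1)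
  (hd : 0 <= d <= 1) (he : 0 <= e <= 1) (hf : 0 <= f <= 1) :
  A_i a b c d e f <= Q3 a b c d e f.
Proof.
  enough (0 <= Q3 a b c d e f - A_i a b c d e f) by lra.
  rewrite Q3_sub_A_i.
  repeat apply Rplus_le_le_0_compat; try apply sqr_mul_one_sub_sqr_ge0; try lra.
  apply Rmult_le_pos; [lra|].
  repeat apply Rplus_le_le_0_compat; repeat apply Rmult_le_pos; lra.
Qed.

(* The arguments are the cosines on the edges (ij, ik, ih, jk, jh, kh);
   transposing vertex i with j, k or h permutes them as below. *)
Lemma Q3_swap_ij (a b c d e f : R) : Q3 a d e b c f = Q3 a b c d e f.
Proof. unfold Q3; ring. Qed.

Lemma Q3_swap_ik (a b c d e f : R) : Q3 d b f a e c = Q3 a b c d e f.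
Proof. unfold Q3; ring. Qed.

Lemma Q3_swap_ih (a b c d e f : R) : Q3 e f c d a b = Q3 a b c d e f.
Proof. unfold Q3; ring. Qed.

Lemma A_i_swap_ij (a b c d e f : R) : A_i a d e b c f = A_j a b c d e f.
Proof. unfold A_i, A_j; ring. Qed.

Lemma A_i_swap_ik (a b c d e f : R) : A_i d b f a e c = A_k a b c d e f.
Proof. unfold A_i, A_k; ring. Qed.

Lemma A_i_swap_ih (a b c d e f : R) : A_i e f c d a b = A_h a b c d e f.
Proof. unfold A_i, A_h; ring. Qed.

Lemma A_j_le_Q3 (a b c d e f : R)
  (ha : 0 <= a <= 1) (hb : 0 <= b <= 1) (hc : 0 <= c <= 1)
  (hd : 0 <= d <= 1) (he : 0 <= e <= 1) (hf : 0 <= f <= 1) :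
  A_j a b c d e f <= Q3 a b c d e f.
Proof. rewrite <- A_i_swap_ij, <- Q3_swap_ij; exact (A_i_le_Q3 a d e b c f ha hd he hb hc hf). Qed.

Lemma A_k_le_Q3 (a b c d e f : R)
  (ha : 0 <= a <= 1) (hb : 0 <= b <= 1) (hc : 0 <= c <= 1)
  (hd : 0 <= d <= 1) (he : 0 <= e <= 1) (hf : 0 <= f <= 1) :
  A_k a b c d e f <= Q3 a b c d e f.
Proof. rewrite <- A_i_swap_ik, <- Q3_swap_ik; exact (A_i_le_Q3 d b f a e c hd hb hf ha he hc). Qed.

Lemma A_h_le_Q3 (a b c d e f : R)
  (ha : 0 <= a <= 1) (hb : 0 <= b <= 1) (hc : 0 <= c <= 1)
  (hd : 0 <= d <= 1) (he : 0 <= e <= 1) (hf : 0 <= f <= 1) :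
  A_h a b c d e f <= Q3 a b c d e f.
Proof. rewrite <- A_i_swap_ih, <- Q3_swap_ih; exact (A_i_le_Q3 e f c d a b he hf hc hd ha hb). Qed.

Theorem lemma2p3 (a b c d e f : R)
  (ha : 0 <= a <= 1) (hb : 0 <= b <= 1) (hc : 0 <= c <= 1)
  (hd : 0 <= d <= 1) (he : 0 <= e <= 1) (hf : 0 <= f <= 1) :
  ((0 <= A_i a b c d e f \/ 0 <= A_j a b c d e f \/
    0 <= A_k a b c d e f \/ 0 <= A_h a b c d e f) -> 0 <= Q3 a b c d e f) /\
  ((0 < A_i a b c d e f \/ 0 < A_j a b c d e f \/
    0 < A_k a b c d e f \/ 0 < A_h a b c d e f) -> 0 < Q3 a b c d e f).
Proof.
  pose proof (A_i_le_Q3 a b c d e f ha hb hc hd he hf).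
  pose proof (A_j_le_Q3 a b c d e f ha hb hc hd he hf).
  pose proof (A_k_le_Q3 a b c d e f ha hb hc hd he hf).
  pose proof (A_h_le_Q3 a b c d e f ha hb hc hd he hf).
  split; intros; lra.
Qed.
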